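(* In the setting of the two-hidden-layer main theorem (with the matrix $A\in\mathbb{R}^{(K+2)\times(K+2)}$ defined there from $C_w,C_v,C_u$), let $\tilde\rho_x=\max_{i\in[n]}\|x^i\|_1$, $$\zeta_1=\rho_w\sum_{j=1}^{n_2}\Big[\rho_v\sum_{l=1}^{n_1}(\rho_u\tilde\rho_x)^{\alpha_l}\Big]^{\beta_j},\qquad \zeta_2=\rho_w\sum_{j=1}^{n_2}\beta_j\Big[\rho_v\sum_{l=1}^{n_1}(\rho_u\tilde\rho_x)^{\alpha_l}\Big]^{\beta_j}.$$ Then $C_w\le\zeta_1$ and $C_v\le\zeta_2$, and if $$p_w>4(K+2)\zeta_1+5,\quad p_v>2(K+2)\big[2\zeta_2+\|\beta\|_\infty\big]-1,\quad p_u>2(K+2)\|\alpha\|_\infty(2\zeta_2+\|\beta\|_\infty)-1,$$ then $\rho(A)<1$.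
   Context: Here $K,n_1,n_2\in\mathbb{N}$, $\rho_w,\rho_v,\rho_u>0$, $p_w,p_v,p_u\in(1,\infty)$, $p'=p/(p-1)$, $\alpha\in\mathbb{R}^{n_1}$, $\beta\in\mathbb{R}^{n_2}$ with entries $\ge1$, data $x^i\in\mathbb{R}^d_+$. $\rho_x=\max_i\|x^i\|_{p_u'}$, $\theta=\rho_v\Psi^\alpha_{p_v',p_u}(\mathbf{1},\rho_u\rho_x)$, $C_w=\rho_w\Psi^\beta_{p_w',p_v}(\mathbf{1},\theta)$, $C_v=\rho_w\Psi^\beta_{p_w',p_v}(\beta,\theta)$, $C_u=\|\alpha\|_\infty C_v$, where for $p,q\ge1$, $\gamma\in\mathbb{R}^r_{++}$, $\Psi^\gamma_{p,q}(\delta,t)=\big([\sum_{l\in J}(\delta_lt^{\gamma_l})^{pq/(q-\bar\gamma p)}]^{1-\bar\gamma p/q}+\max_{j\in J^c}(\delta_jt^{\gamma_j})^p\big)^{1/p}$ with $J=\{l:\gamma_lp<q\}$, $J^c=\{l:\gamma_lp\ge q\}$, $\bar\gamma=\min_{l\in J}\gamma_l$, empty sums/maxima $=0$. The matrix $A$: for $m,l\in[K]$, $A_{m,l}=4(p_w'-1)C_w$, $A_{m,K+1}=2(p_w'-1)(2C_v+\|\beta\|_\infty)$, $A_{m,K+2}=2(p_w'-1)(2C_u+\|\alpha\|_\infty\|\beta\|_\infty)$, $A_{K+1,l}=2(p_v'-1)(2C_w+1)$, $A_{K+1,K+1}=2(p_v'-1)(2C_v+\|\beta\|_\infty-1)$,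 $A_{K+1,K+2}=2(p_v'-1)(2C_u+\|\alpha\|_\infty\|\beta\|_\infty)$, $A_{K+2,l}=2(p_u'-1)(2C_w+1)$, $A_{K+2,K+1}=2(p_u'-1)(2C_v+\|\beta\|_\infty)$, $A_{K+2,K+2}=2(p_u'-1)(2C_u+\|\alpha\|_\infty\|\beta\|_\infty-1)$. $\rho(A)$ is the spectral radius. *)

From Stdlib Require Import Reals Lra Lia List ClassicalEpsilon.
Import ListNotations.
Open Scope R_scope.

Definition sumR (n : nat) (f : nat -> R) : R :=
  fold_right Rplus 0 (map f (seq 0 n)).

Definition maxL (l : list nat) (f : nat -> R) : R :=
  fold_right Rmax 0 (map f l).

(* real power x^y for x >= 0, with the convention 0^y = 0 (all exponents used are > 0);
   Stdlib's Rpower would give Rpower 0 y = 1. *)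
Definition rpow (x y : R) : R :=
  if Rle_dec x 0 then 0 else Rpower x y.

Definition conj (p : R) : R := p / (p - 1).

Definition pnorm (p : R) (d : nat) (v : nat -> R) : R :=
  rpow (sumR d (fun k => rpow (Rabs (v k)) p)) (1 / p).
Definition norm1 (d : nat) (v : nat -> R) : R := sumR d (fun k => Rabs (v k)).
Definition infnorm (r : nat) (v : nat -> R) : R := maxL (seq 0 r) (fun k => Rabs (v k)).

Definition Jset (r : nat) (gamma : nat -> R) (p q : R) : list nat :=
  filter (fun l => if Rlt_dec (gamma l * p) q then true else false) (seq 0 r).
Definition Jcset (r : nat) (gamma : nat -> R) (p q : R) : list nat :=
  filter (fun l => if Rlt_dec (gamma l * p) q then false else true) (seq 0 r).
Definition gbar (r : nat) (gamma : nat -> R) (p q : R) : R :=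
  match Jset r gamma p q with
  | [] => 0
  | l :: ls => fold_right Rmin (gamma l) (map gamma ls)
  end.
Definition Psi (r : nat) (gamma : nat -> R) (p q : R) (delta : nat -> R) (t : R) : R :=
  let g := gbar r gamma p q in
  let S := fold_right Rplus 0
             (map (fun l => rpow (delta l * rpow t (gamma l)) (p * q / (q - g * p)))
                  (Jset r gamma p q)) in
  let M := maxL (Jcset r gamma p q) (fun j => rpow (delta j * rpow t (gamma j)) p) in
  rpow (rpow S (1 - g * p / q) + M) (1 / p).

Definition ones : nat -> R := fun _ => 1.

Definition rho_x (pu : R) (n d : nat) (x : nat -> nat -> R) : R :=
  maxL (seq 0 n) (fun i => pnorm (conj pu) d (x i)).
Definition rho_x_tilde (n d : nat) (x : nat -> nat -> R) : R :=
  maxL (seq 0 n) (fun i => norm1 d (x i)).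

Definition theta n1 (alpha : nat -> R) rho_v rho_u pv pu n d x : R :=
  rho_v * Psi n1 alpha (conj pv) pu ones (rho_u * rho_x pu n d x).
Definition Cw n1 n2 alpha beta rho_w rho_v rho_u pw pv pu n d x : R :=
  rho_w * Psi n2 beta (conj pw) pv ones (theta n1 alpha rho_v rho_u pv pu n d x).
Definition Cv n1 n2 alpha beta rho_w rho_v rho_u pw pv pu n d x : R :=
  rho_w * Psi n2 beta (conj pw) pv beta (theta n1 alpha rho_v rho_u pv pu n d x).
Definition Cu n1 n2 alpha beta rho_w rho_v rho_u pw pv pu n d x : R :=
  infnorm n1 alpha * Cv n1 n2 alpha beta rho_w rho_v rho_u pw pv pu n d x.

(* The (K+2)x(K+2) matrix A, 0-indexed: rows/cols 0..K-1 correspond to [K],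
   index K to K+1, index K+1 to K+2 of the paper. *)
Definition Amat (K : nat) (cw cv cu pw pv pu na nb : R) (i j : nat) : R :=
  let row (c : R) (dv du : R) :=
    if (j <? K)%nat then c
    else if (j =? K)%nat then dv else du in
  if (i <? K)%nat then
    row (4 * (conj pw - 1) * cw) (2 * (conj pw - 1) * (2 * cv + nb))
        (2 * (conj pw - 1) * (2 * cu + na * nb))
  else if (i =? K)%nat then
    row (2 * (conj pv - 1) * (2 * cw + 1)) (2 * (conj pv - 1) * (2 * cv + nb - 1))
        (2 * (conj pv - 1) * (2 * cu + na * nb))
  else
    row (2 * (conj pu - 1) * (2 * cw + 1)) (2 * (conj pu - 1) * (2 * cv + nb))
        (2 * (conj pu - 1) * (2 * cu + na * nb - 1)).

(* complex eigenvalue a + i b of a real N x N matrix M (complex numbers as pairs of reals):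
   there is a nonzero complex vector vr + i vi with M (vr + i vi) = (a + i b)(vr + i vi). *)
Definition is_eigenvalue (N : nat) (M : nat -> nat -> R) (a b : R) : Prop :=
  exists vr vi : nat -> R,
    (exists k, (k < N)%nat /\ (vr k <> 0 \/ vi k <> 0)) /\
    forall i, (i < N)%nat ->
      sumR N (fun j => M i j * vr j) = a * vr i - b * vi i /\
      sumR N (fun j => M i j * vi j) = a * vi i + b * vr i.

(* spectral radius = sup of the moduli of the (complex) eigenvalues
   (0 is added to the set, which does not change the value since moduli are >= 0
   and N >= 1 matrices have eigenvalues). *)
Definition eig_moduli (N : nat) (M : nat -> nat -> R) (r : R) : Prop :=
  r = 0 \/ exists a b, is_eigenvalue N M a b /\ r = sqrt (a * a + b * b).
Definition spectral_radius (N : nat) (M : nat -> nat -> R) : R :=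
  epsilon (inhabits 0) (fun r => is_lub (eig_moduli N M) r).

(* Each constant C_w, C_v is rho_w * Psi(delta, theta) with all exponents >= 1, and Psi is
   dominated by the plain sum sum_l delta_l t^(gamma_l): on J this is superadditivity of
   s |-> s^e for e >= 1, and on J^c the maximum is at most the sum.  Together with
   ||x||_{p'} <= ||x||_1 and monotonicity this gives C_w <= zeta_1 and C_v <= zeta_2.
   For the spectral radius, A is entrywise nonnegative and the positive vector
   v = (B,...,B, 2C_w+1, (2C_w+1)/||alpha||_inf), B = 2C_v+||beta||_inf, satisfies
   (A v)_i = c_i v_i with c_i < 1 under the three hypotheses on p_w, p_v, p_u
   (using p'-1 = 1/(p-1)); any eigenvector z then has |lambda| <= max_i c_i by looking
   at an index maximising |z_i|/v_i. *)
From Stdlib Require Import Reals List Lra Lia ClassicalEpsilon.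
Import ListNotations.
Open Scope R_scope.

Definition lsum (l : list nat) (f : nat -> R) : R := fold_right Rplus 0 (map f l).

Lemma lsum_cons a l f : lsum (a :: l) f = f a + lsum l f.
Proof. reflexivity. Qed.

Lemma lsum_le l f g : (forall k, In k l -> f k <= g k) -> lsum l f <= lsum l g.
Proof.
  induction l as [|a l IH]; intros H; [unfold lsum; simpl; lra|].
  rewrite !lsum_cons.
  apply Rplus_le_compat; [apply H; left; auto | apply IH; intros; apply H; right; auto].
Qed.

Lemma lsum_nonneg l f : (forall k, In k l -> 0 <= f k) -> 0 <= lsum l f.
Proof.
  induction l as [|a l IH]; intros H; [unfold lsum; simpl; lra|]. rewrite lsum_cons.
  apply Rplus_le_le_0_compat; [apply H; left; auto | apply IH; intros; apply H; right; auto].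
Qed.

Lemma lsum_elem_le l f k : (forall k, In k l -> 0 <= f k) -> In k l -> f k <= lsum l f.
Proof.
  induction l as [|a l IH]; intros H Hk; [contradiction|]. rewrite lsum_cons.
  assert (0 <= f a) by (apply H; left; auto).
  assert (0 <= lsum l f) by (apply lsum_nonneg; intros; apply H; right; auto).
  destruct Hk as [<-|Hk]; [lra|].
  assert (f k <= lsum l f) by (apply IH; auto; intros; apply H; right; auto). lra.
Qed.

Lemma sumR_S n f : sumR (S n) f = sumR n f + f n.
Proof.
  unfold sumR. rewrite seq_S, map_app, fold_right_app. simpl.
  fold (lsum (seq 0 n) f). generalize (seq 0 n) as l.
  induction l as [|a l IH]; unfold lsum in *; simpl; [lra|]. rewrite IH. lra.
Qed.

Lemma sumR_le n f g : (forall j, (j < n)%nat -> f j <= g j) -> sumR n f <= sumR n g.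
Proof. intros H. apply lsum_le. intros k Hk. apply in_seq in Hk. apply H; lia. Qed.

Lemma sumR_scal n c f : sumR n (fun j => c * f j) = c * sumR n f.
Proof. induction n; [unfold sumR; simpl; lra|]. rewrite !sumR_S, IHn. lra. Qed.

Lemma sumR_blocks K f : (forall j, (j < K)%nat -> f j = f 0%nat) ->
  sumR (K + 2) f = INR K * f 0%nat + f K + f (S K).
Proof.
  intros H. replace (K + 2)%nat with (S (S K)) by lia. rewrite !sumR_S.
  enough (sumR K f = INR K * f 0%nat) by lra.
  induction K as [|K IH]; [unfold sumR; simpl; lra|].
  rewrite sumR_S, IH, S_INR, (H K) by (auto || intros; apply H; lia). lra.
Qed.

Lemma maxL_le l f c : 0 <= c -> (forall k, In k l -> f k <= c) -> maxL l f <= c.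
Proof.
  induction l as [|a l IH]; intros Hc H; unfold maxL in *; simpl; [lra|].
  apply Rmax_lub; [apply H; left; auto | apply IH; auto; intros; apply H; right; auto].
Qed.

Lemma maxL_lt l f c : 0 < c -> (forall k, In k l -> f k < c) -> maxL l f < c.
Proof.
  induction l as [|a l IH]; intros Hc H; unfold maxL in *; simpl; [lra|].
  apply Rmax_lub_lt; [apply H; left; auto | apply IH; auto; intros; apply H; right; auto].
Qed.

Lemma maxL_nonneg l f : 0 <= maxL l f.
Proof. induction l; unfold maxL in *; simpl; [lra|]. eapply Rle_trans; [exact IHl | apply Rmax_r]. Qed.

Lemma maxL_ge l f k : In k l -> f k <= maxL l f.
Proof.
  induction l as [|a l IH]; intros Hk; [contradiction|]. unfold maxL in *; simpl.
  destruct Hk as [<-|Hk]; [apply Rmax_l | eapply Rle_trans; [apply IH; auto | apply Rmax_r]].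
Qed.

Lemma maxL_mono l f g : (forall k, In k l -> f k <= g k) -> maxL l f <= maxL l g.
Proof.
  intros H. apply maxL_le; [apply maxL_nonneg|].
  intros k Hk. eapply Rle_trans; [apply H; auto | apply maxL_ge; auto].
Qed.

Lemma maxL_attained l f : 0 < maxL l f -> exists k, In k l /\ maxL l f = f k.
Proof.
  induction l as [|a l IH]; intros H; unfold maxL in *; simpl in *; [lra|].
  destruct (Rle_dec (f a) (fold_right Rmax 0 (map f l))) as [Hle|Hlt].
  - rewrite Rmax_right in * by auto. destruct (IH H) as [k [Hk Ek]]. eauto.
  - rewrite Rmax_left by lra. eauto.
Qed.

Lemma rpow_nonneg x y : 0 <= rpow x y.
Proof. unfold rpow. destruct (Rle_dec x 0); [lra | left; apply exp_pos]. Qed.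

Lemma rpow_le0 x y : x <= 0 -> rpow x y = 0.
Proof. intros H. unfold rpow. destruct (Rle_dec x 0); [reflexivity | lra]. Qed.

Lemma rpow_pos x y : 0 < x -> rpow x y = Rpower x y.
Proof. intros H. unfold rpow. destruct (Rle_dec x 0); [lra | reflexivity]. Qed.

Lemma rpow_1 x : 0 <= x -> rpow x 1 = x.
Proof.
  intros H. destruct (Req_dec x 0) as [->|Hx]; [apply rpow_le0; lra|].
  rewrite rpow_pos by lra. apply Rpower_1; lra.
Qed.

Lemma rpow_rpow x a b : 0 <= x -> rpow (rpow x a) b = rpow x (a * b).
Proof.
  intros H. destruct (Req_dec x 0) as [->|Hx]; [rewrite !(rpow_le0 0) by lra; reflexivity|].
  rewrite !(rpow_pos x), rpow_pos by (lra || apply exp_pos). apply Rpower_mult.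
Qed.

Lemma rpow_le x y e : 0 <= x -> x <= y -> 0 < e -> rpow x e <= rpow y e.
Proof.
  intros H1 H2 He. destruct (Req_dec x 0) as [->|Hx]; [rewrite rpow_le0 by lra; apply rpow_nonneg|].
  rewrite !rpow_pos by lra. apply Rle_Rpower_l; lra.
Qed.

Lemma Rpower_le_self x s : 0 < x <= 1 -> 1 <= s -> Rpower x s <= x.
Proof.
  intros Hx Hs. unfold Rpower. rewrite <- (exp_ln x) at 2 by lra.
  assert (ln x <= 0).
  { rewrite <- ln_1. destruct (Req_dec x 1) as [->|]; [lra|]. left; apply ln_increasing; lra. }
  destruct (Req_dec (s * ln x) (ln x)) as [->|]; [lra|].
  left; apply exp_increasing; nra.
Qed.

Lemma rpow_superadd A b s : 0 <= A -> 0 <= b -> 1 <= s -> rpow A s + rpow b s <= rpow (A + b) s.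
Proof.
  intros HA Hb Hs.
  destruct (Req_dec A 0) as [->|HA']; [rewrite (rpow_le0 0) by lra; rewrite !Rplus_0_l; lra|].
  destruct (Req_dec b 0) as [->|Hb']; [rewrite (rpow_le0 0) by lra; rewrite !Rplus_0_r; lra|].
  set (T := A + b). assert (HT : 0 < T) by (unfold T; lra).
  rewrite !rpow_pos by lra.
  (* normalise by T: (A/T)^s + (b/T)^s <= A/T + b/T = 1 *)
  replace A with (A / T * T) at 1 by (field; lra).
  replace b with (b / T * T) at 1 by (field; lra).
  assert (HAT : 0 < A / T) by (apply Rdiv_lt_0_compat; lra).
  assert (HbT : 0 < b / T) by (apply Rdiv_lt_0_compat; lra).
  assert (Hsum : A / T + b / T = 1) by (unfold T; field; lra).
  rewrite <- !Rpower_mult_distr by lra.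
  assert (Rpower (A / T) s <= A / T) by (apply Rpower_le_self; lra).
  assert (Rpower (b / T) s <= b / T) by (apply Rpower_le_self; lra).
  assert (0 < Rpower T s) by apply exp_pos.
  nra.
Qed.

Lemma lsum_rpow_le l f s : 1 <= s -> (forall k, In k l -> 0 <= f k) ->
  lsum l (fun k => rpow (f k) s) <= rpow (lsum l f) s.
Proof.
  intros Hs. induction l as [|a l IH]; intros H.
  - unfold lsum; simpl. rewrite rpow_le0; lra.
  - rewrite !lsum_cons.
    assert (0 <= f a) by (apply H; left; auto).
    assert (0 <= lsum l f) by (apply lsum_nonneg; intros; apply H; right; auto).
    assert (lsum l (fun k => rpow (f k) s) <= rpow (lsum l f) s)
      by (apply IH; intros; apply H; right; auto).
    pose proof (rpow_superadd (f a) (lsum l f) s). lra.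
Qed.

Lemma rpow_inv_le X Y s : 0 <= X -> 0 <= Y -> 0 < s -> X <= rpow Y s -> rpow X (1 / s) <= Y.
Proof.
  intros HX HY Hs H.
  eapply Rle_trans; [apply rpow_le; [auto | exact H | apply Rdiv_lt_0_compat; lra]|].
  rewrite rpow_rpow by auto. replace (s * (1 / s)) with 1 by (field; lra). rewrite rpow_1; lra.
Qed.

Lemma rpow_lsum_rpow_le l f s e : 1 <= s -> 0 < e -> (forall k, In k l -> 0 <= f k) ->
  rpow (lsum l (fun k => rpow (f k) s)) e <= rpow (lsum l f) (s * e).
Proof.
  intros Hs He Hf. rewrite <- rpow_rpow by (apply lsum_nonneg; auto).
  apply rpow_le; auto; [apply lsum_nonneg; intros; apply rpow_nonneg | apply lsum_rpow_le; auto].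
Qed.

Lemma rpow_add_rpow_le X Y p : 0 <= X -> 0 <= Y -> 1 <= p ->
  rpow (rpow X p + rpow Y p) (1 / p) <= X + Y.
Proof.
  intros HX HY Hp. apply rpow_inv_le; try lra.
  - apply Rplus_le_le_0_compat; apply rpow_nonneg.
  - apply rpow_superadd; auto.
Qed.

Lemma Jset_In r γ p q k : In k (Jset r γ p q) -> (k < r)%nat /\ γ k * p < q.
Proof.
  unfold Jset. intros [H1 H2]%filter_In. apply in_seq in H1.
  destruct (Rlt_dec (γ k * p) q); [split; [lia | auto] | discriminate].
Qed.

Lemma Jcset_In r γ p q k : In k (Jcset r γ p q) -> (k < r)%nat.
Proof. unfold Jcset. intros [H1 _]%filter_In. apply in_seq in H1. lia. Qed.

Lemma lsum_Jset_Jcset r γ p q f :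
  lsum (Jset r γ p q) f + lsum (Jcset r γ p q) f = sumR r f.
Proof.
  unfold Jset, Jcset, sumR. fold (lsum (seq 0 r) f). generalize (seq 0 r) as l.
  induction l as [|a l IH]; [unfold lsum; simpl; lra|].
  simpl. destruct (Rlt_dec (γ a * p) q); rewrite !lsum_cons, <- IH; lra.
Qed.

Lemma gbar_In r γ p q : Jset r γ p q <> [] ->
  exists m, In m (Jset r γ p q) /\ gbar r γ p q = γ m.
Proof.
  unfold gbar. destruct (Jset r γ p q) as [|l0 ls]; [congruence|]. intros _.
  induction ls as [|b ls IH]; [exists l0; simpl; auto|].
  destruct IH as [m [Hm E]]. simpl in *. rewrite E.
  destruct (Rle_dec (γ b) (γ m)).
  - exists b. rewrite Rmin_left; auto.
  - exists m. rewrite Rmin_right by lra. intuition.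
Qed.

Section PsiBound.

Variables (r : nat) (γ : nat -> R) (p q : R) (a : nat -> R).
Hypotheses (Hp : 1 <= p) (Hq : 0 < q) (Hγ : forall l, (l < r)%nat -> 0 < γ l)
  (Ha : forall l, (l < r)%nat -> 0 <= a l).

Let J := Jset r γ p q.
Let g := gbar r γ p q.

Lemma Psi_Jpart_le :
  rpow (lsum J (fun l => rpow (a l) (p * q / (q - g * p)))) (1 - g * p / q)
  <= rpow (lsum J a) p.
Proof.
  destruct (list_eq_dec Nat.eq_dec J []) as [HJ|HJ].
  { rewrite HJ. unfold lsum; simpl. rewrite rpow_le0 by lra. apply rpow_nonneg. }
  destruct (gbar_In r γ p q HJ) as [m [Hm Eg]]. fold J g in Hm, Eg.
  destruct (Jset_In r γ p q m Hm) as [Hmr Hmq]. pose proof (Hγ m Hmr).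
  set (D := q - g * p).
  assert (HD : 0 < D <= q) by (unfold D; rewrite Eg; nra).
  (* exponents s = pq/D >= 1 and e = D/q > 0 with s e = p *)
  replace (1 - g * p / q) with (D / q) by (unfold D; field; lra).
  assert (Hse : p * q / D * (D / q) = p) by (field; lra).
  apply Rle_trans with (rpow (lsum J a) (p * q / D * (D / q))); [|rewrite Hse; lra].
  apply rpow_lsum_rpow_le.
  - apply (Rmult_le_reg_r D); [lra|]. unfold Rdiv. rewrite Rmult_assoc, Rinv_l by lra. nra.
  - apply Rdiv_lt_0_compat; lra.
  - intros k Hk. apply Ha, (Jset_In r γ p q k Hk).
Qed.

Lemma Psi_le_sum (δ : nat -> R) (t : R) :
  (forall l, (l < r)%nat -> a l = δ l * rpow t (γ l)) -> Psi r γ p q δ t <= sumR r a.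
Proof.
  intros Hδ. unfold Psi. cbv zeta. fold J g.
  rewrite (map_ext_in _ (fun l => rpow (a l) (p * q / (q - g * p)))).
  2:{ intros l Hl. rewrite Hδ by apply (Jset_In r γ p q l Hl). reflexivity. }
  change (fold_right Rplus 0 (map (fun l => rpow (a l) (p * q / (q - g * p))) J))
    with (lsum J (fun l => rpow (a l) (p * q / (q - g * p)))).
  set (Jc := Jcset r γ p q).
  assert (HaJc : forall k, In k Jc -> 0 <= a k) by (intros k Hk; apply Ha, (Jcset_In r γ p q k Hk)).
  assert (HM : maxL Jc (fun j => rpow (δ j * rpow t (γ j)) p) <= rpow (lsum Jc a) p).
  { apply maxL_le; [apply rpow_nonneg|]. intros k Hk.
    rewrite <- Hδ by apply (Jcset_In r γ p q k Hk).
    apply rpow_le; [auto | apply lsum_elem_le; auto | lra]. }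
  rewrite <- (lsum_Jset_Jcset r γ p q a). fold J Jc.
  eapply Rle_trans; [apply rpow_le | apply rpow_add_rpow_le; auto].
  - apply Rplus_le_le_0_compat; [apply rpow_nonneg | apply maxL_nonneg].
  - apply Rplus_le_compat; [apply Psi_Jpart_le | exact HM].
  - apply Rdiv_lt_0_compat; lra.
  - apply lsum_nonneg. intros k Hk. apply Ha, (Jset_In r γ p q k Hk).
  - apply lsum_nonneg; auto.
Qed.

End PsiBound.

Lemma Psi_le_at r γ p q δ t T : 1 <= p -> 0 < q -> 0 <= t <= T ->
  (forall l, (l < r)%nat -> 1 <= γ l) -> (forall l, (l < r)%nat -> 0 <= δ l) ->
  Psi r γ p q δ t <= sumR r (fun l => δ l * rpow T (γ l)).
Proof.
  intros Hp Hq Ht Hγ Hδ.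
  eapply Rle_trans.
  - apply (Psi_le_sum r γ p q (fun l => δ l * rpow t (γ l))); auto.
    + intros l Hl. specialize (Hγ l Hl). lra.
    + intros l Hl. apply Rmult_le_pos; [auto | apply rpow_nonneg].
  - apply sumR_le. intros j Hj. specialize (Hγ j Hj).
    apply Rmult_le_compat_l; [auto | apply rpow_le; lra].
Qed.

Lemma Psi_nonneg r γ p q δ t : 0 <= Psi r γ p q δ t.
Proof. apply rpow_nonneg. Qed.

Lemma conj_sub1 p : 1 < p -> conj p - 1 = / (p - 1).
Proof. intros H. unfold conj. field. lra. Qed.

Lemma conj_gt1 p : 1 < p -> 1 < conj p.
Proof.
  intros H. assert (0 < / (p - 1)) by (apply Rinv_0_lt_compat; lra).
  pose proof (conj_sub1 p H). lra.
Qed.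

Lemma conj_sub1_mul_lt1 p X : 1 < p -> X < p - 1 -> (conj p - 1) * X < 1.
Proof.
  intros Hp HX. rewrite conj_sub1 by auto.
  apply (Rmult_lt_reg_l (p - 1)); [lra|]. rewrite <- Rmult_assoc, Rinv_r; lra.
Qed.

Lemma pnorm_le_norm1 p d v : 1 <= p -> pnorm p d v <= norm1 d v.
Proof.
  intros Hp. apply rpow_inv_le; try lra.
  - apply lsum_nonneg; intros; apply rpow_nonneg.
  - apply lsum_nonneg; intros; apply Rabs_pos.
  - apply (lsum_rpow_le (seq 0 d) (fun k => Rabs (v k))); [lra | intros; apply Rabs_pos].
Qed.

Lemma rho_x_le_tilde pu n d x : 1 < pu -> 0 <= rho_x pu n d x <= rho_x_tilde n d x.
Proof.
  intros Hpu. split; [apply maxL_nonneg|].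
  apply maxL_mono. intros i _. apply pnorm_le_norm1. pose proof (conj_gt1 pu Hpu). lra.
Qed.

Lemma infnorm_ge1 r f : (1 <= r)%nat -> (forall l, (l < r)%nat -> 1 <= f l) -> 1 <= infnorm r f.
Proof.
  intros Hr Hf. assert (1 <= f 0%nat) by (apply Hf; lia).
  eapply Rle_trans; [|apply (maxL_ge (seq 0 r) (fun k => Rabs (f k)) 0%nat), in_seq; lia].
  rewrite Rabs_right; lra.
Qed.

Lemma sqrt_sum_sq_triangle a1 b1 a2 b2 :
  sqrt ((a1 + a2) * (a1 + a2) + (b1 + b2) * (b1 + b2))
  <= sqrt (a1 * a1 + b1 * b1) + sqrt (a2 * a2 + b2 * b2).
Proof.
  set (n1 := sqrt (a1 * a1 + b1 * b1)). set (n2 := sqrt (a2 * a2 + b2 * b2)).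
  assert (0 <= n1 /\ 0 <= n2) as [H1 H2] by (split; apply sqrt_pos).
  assert (E1 : n1 * n1 = a1 * a1 + b1 * b1) by (apply sqrt_sqrt; nra).
  assert (E2 : n2 * n2 = a2 * a2 + b2 * b2) by (apply sqrt_sqrt; nra).
  (* Cauchy-Schwarz via Lagrange's identity *)
  assert (Hcs : a1 * a2 + b1 * b2 <= n1 * n2).
  { destruct (Rle_dec (a1 * a2 + b1 * b2) 0); [nra|].
    assert ((a1 * a2 + b1 * b2) * (a1 * a2 + b1 * b2) <= (n1 * n1) * (n2 * n2))
      by (rewrite E1, E2; pose proof (Rle_0_sqr (a1 * b2 - b1 * a2)); unfold Rsqr in *; nra).
    apply Rnot_lt_le. intros Hlt.
    assert (n1 * n2 * (n1 * n2) < (a1 * a2 + b1 * b2) * (a1 * a2 + b1 * b2))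
      by (apply Rmult_le_0_lt_compat; nra).
    lra. }
  rewrite <- (sqrt_square (n1 + n2)) by lra. apply sqrt_le_1_alt. nra.
Qed.

Lemma sqrt_sum_sq_lsum l P Q :
  sqrt (lsum l P * lsum l P + lsum l Q * lsum l Q)
  <= lsum l (fun j => sqrt (P j * P j + Q j * Q j)).
Proof.
  induction l as [|a l IH].
  - unfold lsum; simpl. rewrite Rmult_0_l, Rplus_0_l, sqrt_0. lra.
  - rewrite !lsum_cons. eapply Rle_trans; [apply sqrt_sum_sq_triangle | lra].
Qed.

Section SpectralBound.

Variables (N : nat) (M : nat -> nat -> R) (v : nat -> R).
Hypotheses (HM : forall i j, (i < N)%nat -> (j < N)%nat -> 0 <= M i j)
  (Hv : forall i, (i < N)%nat -> 0 < v i).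

Lemma eigenvalue_modulus_le c a b :
  (forall i, (i < N)%nat -> sumR N (fun j => M i j * v j) <= c * v i) ->
  is_eigenvalue N M a b -> sqrt (a * a + b * b) <= c.
Proof.
  intros Hc [vr [vi [[k0 [Hk0 Hnz]] Heq]]].
  set (nz := fun j => sqrt (vr j * vr j + vi j * vi j)).
  set (m := maxL (seq 0 N) (fun k => nz k / v k)).
  assert (Hnz0 : 0 < nz k0).
  { apply sqrt_lt_R0. destruct Hnz as [h|h]; pose proof (Rsqr_pos_lt _ h); unfold Rsqr in *; nra. }
  assert (Hm0 : 0 < m).
  { apply Rlt_le_trans with (nz k0 / v k0); [apply Rdiv_lt_0_compat; auto|].
    apply (maxL_ge _ (fun k => nz k / v k)), in_seq; lia. }
  destruct (maxL_attained _ _ Hm0) as [i [Hi Ei]]. apply in_seq in Hi.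
  assert (HiN : (i < N)%nat) by lia. pose proof (Hv i HiN).
  assert (Enzi : nz i = m * v i) by (fold m in Ei; rewrite Ei; field; lra).
  assert (Hnzj : forall j, (j < N)%nat -> nz j <= m * v j).
  { intros j Hj. pose proof (Hv j Hj).
    assert (nz j / v j <= m) by (apply (maxL_ge _ (fun k => nz k / v k)), in_seq; lia).
    replace (nz j) with (nz j / v j * v j) by (field; lra). nra. }
  destruct (Heq i HiN) as [E1 E2].
  apply (Rmult_le_reg_r (nz i)); [rewrite Enzi; nra|].
  unfold nz at 1. rewrite <- sqrt_mult by nra.
  replace ((a * a + b * b) * (vr i * vr i + vi i * vi i)) with
    ((a * vr i - b * vi i) * (a * vr i - b * vi i) + (a * vi i + b * vr i) * (a * vi i + b * vr i))
    by ring.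
  rewrite <- E1, <- E2.
  eapply Rle_trans; [apply (sqrt_sum_sq_lsum (seq 0 N))|].
  apply Rle_trans with (sumR N (fun j => m * (M i j * v j))).
  - apply sumR_le. intros j Hj. pose proof (HM i j HiN Hj). pose proof (Hnzj j Hj).
    replace (M i j * vr j * (M i j * vr j) + M i j * vi j * (M i j * vi j))
      with ((M i j * M i j) * (vr j * vr j + vi j * vi j)) by ring.
    rewrite sqrt_mult, sqrt_square by nra. fold (nz j). nra.
  - rewrite sumR_scal, Enzi. specialize (Hc i HiN). nra.
Qed.

Lemma spectral_radius_lt1 :
  (forall i, (i < N)%nat -> sumR N (fun j => M i j * v j) < v i) -> spectral_radius N M < 1.
Proof.
  intros Hrow.
  set (c := maxL (seq 0 N) (fun i => sumR N (fun j => M i j * v j) / v i)).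
  assert (Hc1 : c < 1).
  { apply maxL_lt; [lra|]. intros i Hi. apply in_seq in Hi.
    pose proof (Hv i ltac:(lia)). pose proof (Hrow i ltac:(lia)).
    apply (Rmult_lt_reg_r (v i)); auto. unfold Rdiv. rewrite Rmult_assoc, Rinv_l; lra. }
  assert (Hbound : is_upper_bound (eig_moduli N M) c).
  { intros r [-> | [a [b [Hev ->]]]]; [apply maxL_nonneg|].
    apply (eigenvalue_modulus_le c a b); auto.
    intros i Hi. pose proof (Hv i Hi).
    assert (Hr : sumR N (fun j => M i j * v j) / v i <= c)
      by (apply (maxL_ge _ (fun k => sumR N (fun j => M k j * v j) / v k)), in_seq; lia).
    replace (sumR N (fun j => M i j * v j)) with (sumR N (fun j => M i j * v j) / v i * v i)
      by (field; lra). nra. }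
  assert (Hex : exists r, is_lub (eig_moduli N M) r).
  { destruct (completeness (eig_moduli N M)) as [lub Hlub].
    - exists c; exact Hbound.
    - exists 0; left; reflexivity.
    - exists lub; exact Hlub. }
  destruct (epsilon_spec (inhabits 0) (fun r => is_lub (eig_moduli N M) r) Hex) as [_ Hs].
  specialize (Hs c Hbound). unfold spectral_radius. lra.
Qed.

End SpectralBound.

Section AmatRows.

Variables (K : nat) (cw cv pw pv pu na nb : R).
Hypotheses (HK : (1 <= K)%nat) (Hcw : 0 <= cw) (Hcv : 0 <= cv) (Hna : 1 <= na) (Hnb : 1 <= nb)
  (Hpw : 1 < pw) (Hpv : 1 < pv) (Hpu : 1 < pu).

Let A := Amat K cw cv (na * cv) pw pv pu na nb.
Let B := 2 * cv + nb.
Let w (j : nat) : R := if (j <? K)%nat then B else if (j =? K)%nat then 2 * cw + 1 else (2 * cw + 1) / na.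

Lemma Amat_nonneg i j : 0 <= A i j.
Proof.
  pose proof (conj_gt1 pw Hpw). pose proof (conj_gt1 pv Hpv). pose proof (conj_gt1 pu Hpu).
  assert (0 <= na * nb - 1) by nra.
  unfold A, Amat. cbv zeta.
  destruct (i <? K)%nat, (i =? K)%nat, (j <? K)%nat, (j =? K)%nat; repeat apply Rmult_le_pos; nra.
Qed.

Lemma Amat_weight_pos j : 0 < w j.
Proof.
  unfold w, B. destruct (j <? K)%nat; [lra|]. destruct (j =? K)%nat; [lra|].
  apply Rdiv_lt_0_compat; lra.
Qed.

Fact block_index_tests : (0 <? K)%nat = true /\ (K <? K)%nat = false /\ (K =? K)%nat = true
  /\ (S K <? K)%nat = false /\ (S K =? K)%nat = false.
Proof.
  repeat split; [apply Nat.ltb_lt | apply Nat.ltb_irrefl | apply Nat.eqb_refl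
                 | apply Nat.ltb_ge | apply Nat.eqb_neq]; lia.
Qed.

Lemma Amat_weighted_row i :
  sumR (K + 2) (fun j => A i j * w j)
  = INR K * A i 0%nat * B + A i K * (2 * cw + 1) + A i (S K) * ((2 * cw + 1) / na).
Proof.
  destruct block_index_tests as (E0 & EK1 & EK2 & ES1 & ES2).
  rewrite sumR_blocks.
  - unfold w. rewrite E0, EK1, EK2, ES1, ES2. ring.
  - intros j Hj. assert (Ej : (j <? K)%nat = true) by (apply Nat.ltb_lt; auto).
    unfold w, A, Amat. rewrite Ej, E0. reflexivity.
Qed.

Lemma Amat_rows_contract :
  4 * (INR K + 2) * cw + 4 < pw - 1 ->
  2 * (INR K + 2) * B - 2 < pv - 1 ->
  2 * (INR K + 2) * na * B - 2 < pu - 1 ->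
  forall i, (i < K + 2)%nat -> sumR (K + 2) (fun j => A i j * w j) < w i.
Proof.
  intros Hw Hv Hu i Hi. rewrite Amat_weighted_row.
  destruct block_index_tests as (E0 & EK1 & EK2 & ES1 & ES2).
  assert (Hna0 : na <> 0) by lra.
  assert (HB : 1 <= B) by (unfold B; lra).
  unfold A, Amat, w. cbv zeta.
  rewrite E0, EK1, EK2, ES1, ES2.
  destruct (Nat.lt_ge_cases i K) as [HiK|HiK].
  - rewrite (proj2 (Nat.ltb_lt i K) HiK).
    replace (INR K * (4 * (conj pw - 1) * cw) * B + 2 * (conj pw - 1) * (2 * cv + nb) * (2 * cw + 1)
             + 2 * (conj pw - 1) * (2 * (na * cv) + na * nb) * ((2 * cw + 1) / na))
      with (((conj pw - 1) * (4 * (INR K + 2) * cw + 4)) * B) by (unfold B; field; auto).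
    pose proof (conj_sub1_mul_lt1 pw _ Hpw Hw). nra.
  - assert (i = K \/ i = S K) as [->| ->] by lia.
    + rewrite EK1, EK2.
      replace (INR K * (2 * (conj pv - 1) * (2 * cw + 1)) * B + 2 * (conj pv - 1) * (2 * cv + nb - 1) * (2 * cw + 1)
               + 2 * (conj pv - 1) * (2 * (na * cv) + na * nb) * ((2 * cw + 1) / na))
        with (((conj pv - 1) * (2 * (INR K + 2) * B - 2)) * (2 * cw + 1)) by (unfold B; field; auto).
      pose proof (conj_sub1_mul_lt1 pv _ Hpv Hv). nra.
    + rewrite ES1, ES2.
      replace (INR K * (2 * (conj pu - 1) * (2 * cw + 1)) * B + 2 * (conj pu - 1) * (2 * cv + nb) * (2 * cw + 1)
               + 2 * (conj pu - 1) * (2 * (na * cv) + na * nb - 1) * ((2 * cw + 1) / na))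
        with (((conj pu - 1) * (2 * (INR K + 2) * na * B - 2)) * ((2 * cw + 1) / na))
        by (unfold B; field; auto).
      pose proof (conj_sub1_mul_lt1 pu _ Hpu Hu).
      assert (0 < (2 * cw + 1) / na) by (apply Rdiv_lt_0_compat; lra). nra.
Qed.

Lemma Amat_spectral_radius_lt1 z1 z2 : cw <= z1 -> cv <= z2 ->
  pw > 4 * INR (K + 2) * z1 + 5 ->
  pv > 2 * INR (K + 2) * (2 * z2 + nb) - 1 ->
  pu > 2 * INR (K + 2) * na * (2 * z2 + nb) - 1 ->
  spectral_radius (K + 2) A < 1.
Proof.
  intros Hz1 Hz2 Hw Hv Hu.
  assert (HK2 : 0 <= INR (K + 2)) by apply pos_INR.
  rewrite plus_INR in *. change (INR 2) with 2 in *.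
  apply (spectral_radius_lt1 _ _ w).
  - intros; apply Amat_nonneg.
  - intros; apply Amat_weight_pos.
  - apply Amat_rows_contract; unfold B.
    + assert (4 * (INR K + 2) * cw <= 4 * (INR K + 2) * z1) by (apply Rmult_le_compat_l; lra). lra.
    + assert (2 * (INR K + 2) * (2 * cv + nb) <= 2 * (INR K + 2) * (2 * z2 + nb))
        by (apply Rmult_le_compat_l; lra). lra.
    + assert (2 * (INR K + 2) * na * (2 * cv + nb) <= 2 * (INR K + 2) * na * (2 * z2 + nb))
        by (apply Rmult_le_compat_l; [apply Rmult_le_pos; lra | lra]). lra.
Qed.

End AmatRows.

Lemma theta_le n1 alpha rho_v rho_u pv pu n d x : 0 < rho_v -> 0 < rho_u -> 1 < pv -> 1 < pu ->
  (forall l, (l < n1)%nat -> 1 <= alpha l) ->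
  0 <= theta n1 alpha rho_v rho_u pv pu n d x
  <= rho_v * sumR n1 (fun l => rpow (rho_u * rho_x_tilde n d x) (alpha l)).
Proof.
  intros Hrv Hru Hpv Hpu Ha. pose proof (conj_gt1 pv Hpv). pose proof (rho_x_le_tilde pu n d x Hpu).
  unfold theta. split; [apply Rmult_le_pos; [lra | apply Psi_nonneg]|].
  apply Rmult_le_compat_l; [lra|].
  eapply Rle_trans; [apply Psi_le_at with (T := rho_u * rho_x_tilde n d x)|]; try lra; auto.
  - split; [apply Rmult_le_pos | apply Rmult_le_compat_l]; lra.
  - intros; unfold ones; lra.
  - apply sumR_le. intros. unfold ones. lra.
Qed.

Section LayerConstants.

Variables (n1 n2 n d : nat) (alpha beta : nat -> R) (rho_w rho_v rho_u pw pv pu : R)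
  (x : nat -> nat -> R).
Hypotheses (Hrw : 0 < rho_w) (Hpw : 1 < pw) (Hpv : 1 < pv)
  (Hbeta : forall j, (j < n2)%nat -> 1 <= beta j).

Let th := theta n1 alpha rho_v rho_u pv pu n d x.

Lemma Cw_le inner : 0 <= th <= inner ->
  0 <= Cw n1 n2 alpha beta rho_w rho_v rho_u pw pv pu n d x
  <= rho_w * sumR n2 (fun j => rpow inner (beta j)).
Proof.
  intros Hth. pose proof (conj_gt1 pw Hpw).
  split; [apply Rmult_le_pos; [lra | apply Psi_nonneg]|]. apply Rmult_le_compat_l; [lra|].
  eapply Rle_trans; [apply Psi_le_at with (T := inner); auto; try lra; intros; unfold ones; lra|].
  apply sumR_le. intros. unfold ones. lra.
Qed.

Lemma Cv_le inner : 0 <= th <= inner ->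
  0 <= Cv n1 n2 alpha beta rho_w rho_v rho_u pw pv pu n d x
  <= rho_w * sumR n2 (fun j => beta j * rpow inner (beta j)).
Proof.
  intros Hth. pose proof (conj_gt1 pw Hpw).
  split; [apply Rmult_le_pos; [lra | apply Psi_nonneg]|]. apply Rmult_le_compat_l; [lra|].
  apply Psi_le_at; auto; try lra. intros j Hj. specialize (Hbeta j Hj). lra.
Qed.

End LayerConstants.

Theorem mainTheorem14
  (K n1 n2 n d : nat) (rho_w rho_v rho_u pw pv pu : R)
  (alpha beta : nat -> R) (x : nat -> nat -> R)
  (hK : (1 <= K)%nat) (hn1 : (1 <= n1)%nat) (hn2 : (1 <= n2)%nat)
  (hrw : 0 < rho_w) (hrv : 0 < rho_v) (hru : 0 < rho_u)
  (hpw : 1 < pw) (hpv : 1 < pv) (hpu : 1 < pu)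
  (halpha : forall l, (l < n1)%nat -> 1 <= alpha l)
  (hbeta : forall j, (j < n2)%nat -> 1 <= beta j)
  (hx : forall i k, (i < n)%nat -> (k < d)%nat -> 0 <= x i k) :
  let cw := Cw n1 n2 alpha beta rho_w rho_v rho_u pw pv pu n d x in
  let cv := Cv n1 n2 alpha beta rho_w rho_v rho_u pw pv pu n d x in
  let cu := Cu n1 n2 alpha beta rho_w rho_v rho_u pw pv pu n d x in
  let na := infnorm n1 alpha in
  let nb := infnorm n2 beta in
  let inner := rho_v * sumR n1 (fun l => rpow (rho_u * rho_x_tilde n d x) (alpha l)) in
  let zeta1 := rho_w * sumR n2 (fun j => rpow inner (beta j)) in
  let zeta2 := rho_w * sumR n2 (fun j => beta j * rpow inner (beta j)) in
  cw <= zeta1 /\ cv <= zeta2 /\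
  (pw > 4 * INR (K + 2) * zeta1 + 5 ->
   pv > 2 * INR (K + 2) * (2 * zeta2 + nb) - 1 ->
   pu > 2 * INR (K + 2) * na * (2 * zeta2 + nb) - 1 ->
   spectral_radius (K + 2) (Amat K cw cv cu pw pv pu na nb) < 1).
Proof.
  intros cw cv cu na nb inner zeta1 zeta2.
  pose proof (theta_le n1 alpha rho_v rho_u pv pu n d x hrv hru hpv hpu halpha) as Hth.
  destruct (Cw_le n1 n2 n d alpha beta rho_w rho_v rho_u pw pv pu x hrw hpw hpv hbeta inner Hth) as [Hcw0 Hcw].
  destruct (Cv_le n1 n2 n d alpha beta rho_w rho_v rho_u pw pv pu x hrw hpw hpv hbeta inner Hth)
    as [Hcv0 Hcv].
  split; [exact Hcw | split; [exact Hcv |]]. intros Hw Hv Hu.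
  apply (Amat_spectral_radius_lt1 K cw cv pw pv pu na nb hK Hcw0 Hcv0
           (infnorm_ge1 n1 alpha hn1 halpha) (infnorm_ge1 n2 beta hn2 hbeta) hpw hpv hpu
           zeta1 zeta2); assumption.
Qed.
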